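(* For the system $$u_{0,0}-v_{1,1}=0,\qquad (u_{1,0}-u_{0,0})(v_{1,0}-u_{0,0})-(u_{0,1}-u_{0,0})(v_{0,1}-u_{0,0})=0,$$ each of the following is a symmetry: $$\frac{\partial u_{0,0}}{\partial t_1}=\frac{u_{0,0}-v_{1,0}}{u_{-1,0}-v_{1,0}},\qquad \frac{\partial v_{0,0}}{\partial t_1}=\frac{u_{-1,0}-v_{0,0}}{u_{-1,0}-v_{1,0}},$$ and $$\frac{\partial u_{0,0}}{\partial s_1}=(u_{1,0}-u_{0,0})(v_{1,0}-u_{0,0}),\qquad \frac{\partial v_{0,0}}{\partial s_1}=(u_{-1,0}-v_{0,0})(v_{-1,0}-v_{0,0}).$$
   Context: Unknowns $u,v$ on $\mathbb Z^2$, $u_{i,j}=u(n+i,m+j)$, similarly $v$. Shifts $\mathcal S:n\mapsto n+1$, $\mathcal T:m\mapsto m+1$. For a quad system $\boldsymbol Q(\boldsymbol u_{0,0},\boldsymbol u_{1,0},\boldsymbol u_{0,1},\boldsymbol u_{1,1})=\boldsymbol 0$ with $\boldsymbol u=(u,v)$ and Jacobians $\mathrm Q_{(p,q)}=\partial\boldsymbol Q/\partial\boldsymbol u_{p,q}$, a vector function $\boldsymbol F(n,m,[\boldsymbol u])=(F^{(1)},F^{(2)})$ is a symmetry, written $\partial_t u_{0,0}=F^{(1)}$, $\partial_t v_{0,0}=F^{(2)}$, if $\mathrm Q_{(0,0)}\boldsymbol F+\mathrm Q_{(1,0)}\mathcal S(\boldsymbol F)+\mathrm Q_{(0,1)}\mathcal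 T(\boldsymbol F)+\mathrm Q_{(1,1)}\mathcal S\mathcal T(\boldsymbol F)=\boldsymbol 0$ holds on all solutions of the system (where $\mathcal S^p\mathcal T^q(\boldsymbol F)$ is $\boldsymbol F$ with all shifts of $\boldsymbol u$ shifted by $(p,q)$). *)

From HB Require Import structures.
From mathcomp Require Import all_boot all_order all_algebra.
Set Implicit Arguments. Unset Strict Implicit. Unset Printing Implicit Defensive.
Import Order.TTheory GRing.Theory Num.Theory.
Local Open Scope ring_scope.

Definition Q1 (R : comRingType) (u00 u10 u01 u11 v00 v10 v01 v11 : R) : R :=
  u00 - v11.
Definition Q2 (R : comRingType) (u00 u10 u01 u11 v00 v10 v01 v11 : R) : R :=
  (u10 - u00) * (v10 - u00) - (u01 - u00) * (v01 - u00).

(* Derivative of a polynomial map Q at the point x in the direction y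
   (= sum_j dQ/dx_j (x) * y_j): coefficient of eps in Q(x + eps y). *)
Definition lin8
  (Q : forall R : comRingType, R -> R -> R -> R -> R -> R -> R -> R -> R)
  (K : comRingType) (x1 x2 x3 x4 x5 x6 x7 x8 y1 y2 y3 y4 y5 y6 y7 y8 : K) : K :=
  (Q {poly K} (x1%:P + y1 *: 'X) (x2%:P + y2 *: 'X) (x3%:P + y3 *: 'X)
              (x4%:P + y4 *: 'X) (x5%:P + y5 *: 'X) (x6%:P + y6 *: 'X)
              (x7%:P + y7 *: 'X) (x8%:P + y8 *: 'X))`_1.

Definition field2 (K : Type) := int -> int -> K.

Definition is_solution (K : comRingType) (u v : field2 K) : Prop :=
  forall n m : int,
    Q1 (u n m) (u (n+1) m) (u n (m+1)) (u (n+1) (m+1))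
       (v n m) (v (n+1) m) (v n (m+1)) (v (n+1) (m+1)) = 0 /\
    Q2 (u n m) (u (n+1) m) (u n (m+1)) (u (n+1) (m+1))
       (v n m) (v (n+1) m) (v n (m+1)) (v (n+1) (m+1)) = 0.

(* A flow: given (u,v) (and the point (n,m)), the value of F at (n,m);
   shifts S^p T^q (F) are obtained by evaluating at (n+p, m+q). *)
Definition flow (K : Type) := field2 K -> field2 K -> int -> int -> K.

(* Linearized system Q_(0,0) F + Q_(1,0) S F + Q_(0,1) T F + Q_(1,1) ST F = 0
   holds at every point of every solution (u,v) satisfying the admissibility
   condition Adm (used to exclude vanishing denominators of F). *)
Definition is_symmetry (K : comRingType) (Adm : field2 K -> field2 K -> Prop)
  (F1 F2 : flow K) : Prop :=
  forall u v : field2 K, is_solution u v -> Adm u v ->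
  forall n m : int,
    let f1 p q := F1 u v (n+p) (m+q) in
    let f2 p q := F2 u v (n+p) (m+q) in
    lin8 Q1 (u n m) (u (n+1) m) (u n (m+1)) (u (n+1) (m+1))
            (v n m) (v (n+1) m) (v n (m+1)) (v (n+1) (m+1))
            (f1 0 0) (f1 1 0) (f1 0 1) (f1 1 1)
            (f2 0 0) (f2 1 0) (f2 0 1) (f2 1 1) = 0 /\
    lin8 Q2 (u n m) (u (n+1) m) (u n (m+1)) (u (n+1) (m+1))
            (v n m) (v (n+1) m) (v n (m+1)) (v (n+1) (m+1))
            (f1 0 0) (f1 1 0) (f1 0 1) (f1 1 1)
            (f2 0 0) (f2 1 0) (f2 0 1) (f2 1 1) = 0.

Definition Ft1_u (K : fieldType) : flow K := fun u v n m =>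
  (u n m - v (n+1) m) / (u (n-1) m - v (n+1) m).
Definition Ft1_v (K : fieldType) : flow K := fun u v n m =>
  (u (n-1) m - v n m) / (u (n-1) m - v (n+1) m).
Definition Ft1_adm (K : fieldType) (u v : field2 K) : Prop :=
  forall n m : int, u (n-1) m - v (n+1) m != 0.

Definition Fs1_u (K : comRingType) : flow K := fun u v n m =>
  (u (n+1) m - u n m) * (v (n+1) m - u n m).
Definition Fs1_v (K : comRingType) : flow K := fun u v n m =>
  (u (n-1) m - v n m) * (v (n-1) m - v n m).
Definition no_condition (K : Type) (u v : field2 K) : Prop := True.

From HB Require Import structures.
From mathcomp Require Import all_boot all_order all_algebra ring.
Import GRing.Theory.
Local Open Scope ring_scope.

(* Proof strategy.
   1. The linearizations of Q1 and Q2 are computed once and for all as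
      explicit polynomials in the base point x and the direction y, by reading
      off the coefficient of eps in Q(x + eps y) (a first-order Leibniz rule).
   2. On a solution, Q1 = 0 says v_{p,q} = u_{p-1,q-1}, so v can be
      eliminated everywhere; Q2 = 0 then becomes the scalar quad equation
        (u_{1,0}-u)(u_{0,-1}-u) = (u_{0,1}-u)(u_{-1,0}-u),   u = u_{0,0},
      for u alone.
   3. After eliminating v, each component of the symmetry condition is an
      explicit consequence of that scalar equation: for the t_1 flow both
      components equal its defect divided by a nonzero denominator; for the
      s_1 flow the first component is the defect at (0,0) and the second is a
      polynomial combination of the defects at (0,0), (1,0) and (-1,0). *)

Lemma coef1_mul_linear (K : comNzRingType) (a b c d : K) :
  ((a%:P + b *: 'X) * (c%:P + d *: 'X))`_1 = a * d + b * c.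
Proof.
rewrite coefM big_ord_recr big_ord_recr big_ord0 /=.
by rewrite !coefD !coefC !coefZ !coefX /=; ring.
Qed.

Lemma lin8_Q1 (K : comNzRingType)
    (x1 x2 x3 x4 x5 x6 x7 x8 y1 y2 y3 y4 y5 y6 y7 y8 : K) :
  lin8 Q1 x1 x2 x3 x4 x5 x6 x7 x8 y1 y2 y3 y4 y5 y6 y7 y8 = y1 - y8.
Proof. by rewrite /lin8 /Q1 !coefB !coefD !coefC !coefZ !coefX /=; ring. Qed.

Lemma lin8_Q2 (K : comNzRingType)
    (x1 x2 x3 x4 x5 x6 x7 x8 y1 y2 y3 y4 y5 y6 y7 y8 : K) :
  lin8 Q2 x1 x2 x3 x4 x5 x6 x7 x8 y1 y2 y3 y4 y5 y6 y7 y8 =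
  (y2 - y1) * (x6 - x1) + (x2 - x1) * (y6 - y1)
  - ((y3 - y1) * (x7 - x1) + (x3 - x1) * (y7 - y1)).
Proof.
have sub_linear (a b c d : K) :
    (a%:P + b *: 'X) - (c%:P + d *: 'X) = (a - c)%:P + (b - d) *: 'X.
  by rewrite polyCB scalerBl; ring.
by rewrite /lin8 /Q2 !sub_linear coefB !coef1_mul_linear; ring.
Qed.

Section Solutions.
Variables (K : comNzRingType) (u v : field2 K).
Hypothesis sol : is_solution u v.

Lemma solution_v (p q : int) : v p q = u (p - 1) (q - 1).
Proof.
have := (sol (p - 1) (q - 1)).1.
by rewrite /Q1 !subrK => /eqP; rewrite subr_eq0 => /eqP.
Qed.

Lemma solution_u (n m : int) :
  (u (n + 1) m - u n m) * (u n (m - 1) - u n m) =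
  (u n (m + 1) - u n m) * (u (n - 1) m - u n m).
Proof.
have := (sol n m).2.
by rewrite /Q2 !solution_v !addrK => /eqP; rewrite subr_eq0 => /eqP.
Qed.

End Solutions.
Arguments solution_v {K u v} sol p q.
Arguments solution_u {K u v} sol n m.

(* The t_1 flow is a symmetry (on solutions where its denominator is nonzero):
   both linearized equations are the quad defect at (n,m) over a nonzero
   denominator. *)
Lemma t1_symmetry (K : fieldType) :
  is_symmetry (@Ft1_adm K) (@Ft1_u K) (@Ft1_v K).
Proof.
move=> u v sol adm n m /=.
have := adm n m; have := adm (n + 1) m; have := adm n (m + 1).
have := adm (n + 1) (m + 1).
rewrite lin8_Q1 lin8_Q2 /Ft1_u /Ft1_v !addr0 !(solution_v sol) !addrK.
set a := u n m; set A := u (n + 1) m; set B := u n (m - 1).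
set C := u n (m + 1); set D := u (n - 1) m.
have E0 : (A - a) * (B - a) = (C - a) * (D - a) := solution_u sol n m.
clearbody a A B C D.
move=> adm11 adm01 adm10 adm00; split.
- transitivity (((A - a) * (B - a) - (C - a) * (D - a)) / ((D - B) * (C - A))).
    by field; rewrite adm00 adm11.
  by rewrite E0 subrr mul0r.
- transitivity (((A - a) * (B - a) - (C - a) * (D - a)) / (D - B)).
    by field; rewrite adm00 adm01 adm10.
  by rewrite E0 subrr mul0r.
Qed.

(* The s_1 flow is a symmetry on every solution: the quad equations at
   (n+1,m) and (n-1,m) remove the far values u(n+2,m), u(n-2,m), and what is
   left is a multiple of the quad defect at (n,m). *)
Lemma s1_symmetry (K : comNzRingType) :
  is_symmetry (@no_condition K) (@Fs1_u K) (@Fs1_v K).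
Proof.
move=> u v sol _ n m /=.
rewrite lin8_Q1 lin8_Q2 /Fs1_u /Fs1_v !addr0 !(solution_v sol) !addrK.
have Eplus := solution_u sol (n + 1) m; rewrite addrK in Eplus.
have Eminus := solution_u sol (n - 1) m; rewrite subrK in Eminus.
rewrite Eplus -Eminus.
set a := u n m; set A := u (n + 1) m; set B := u n (m - 1).
set C := u n (m + 1); set D := u (n - 1) m.
set P := u (n - 1) (m - 1); set Q := u (n + 1) (m + 1).
have E0 : (A - a) * (B - a) = (C - a) * (D - a) := solution_u sol n m.
clearbody a A B C D P Q.
split; first by rewrite E0 subrr.
transitivity ((Q - C + (P - D)) * ((C - a) * (D - a) - (A - a) * (B - a))).
  by ring.
by rewrite E0 subrr mulr0.
Qed.

Theorem mainTheorem8 (K : numFieldType) :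
  is_symmetry (@Ft1_adm K) (@Ft1_u K) (@Ft1_v K) /\
  is_symmetry (@no_condition K) (@Fs1_u K) (@Fs1_v K).
Proof. by split; [exact: t1_symmetry | exact: s1_symmetry]. Qed.
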